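(* Every closed guarded expression $\phi\in\mathcal{E}_0$ denotes the behavioural equivalence class of some state in a finite $T$-coalgebra (i.e., there are a finite coalgebra $D$ and a state $z$ of $D$ such that in every $T$-coalgebra $C$, $[\![\phi]\!]_C$ is the set of states behaviourally equivalent to $z$); conversely, for every state $x$ of a finite $T$-coalgebra there is $\phi\in\mathcal{E}_0$ whose denotation in this sense is the behavioural equivalence class of $x$.
   Context: Standing assumptions: $T:\mathbf{Set}\to\mathbf{Set}$ is a functor; $\mathcal{L}$ is a set of modalities with arities ($L/n$), each $L/n$ assigned an $n$-ary monotone singleton-preserving predicate lifting $[\![L]\!]$ for $T$ such that $\Lambda=\{[\![L]\!]\mid L\in\mathcal{L}\}$ is strongly expressive. (An $n$-ary predicate lifting is a family $\lambda_X:(\mathcal{P}X)^n\to\mathcal{P}(TX)$ with $\lambda_X(f^{-1}[A_1],\dots,f^{-1}[A_n])=(Tf)^{-1}[\lambda_Y(A_1,\dots,A_n)]$ for $f:X\to Y$; monotone if monotone in each argument; singleton-preserving if $|\lambda_X(\{x_1\},\dots,\{x_n\})|=1$ for all $x_i\in X$; $\Lambda$ strongly expressive if for every set $X$ and $t\in TX$ there are $\lambda/n\in\Lambda$, $x_i\in X$ with $\{t\}=\lambda_X(\{x_1\},\dots,\{x_n\})$.) Fix a set $V$ of variables. Expressions $\mathcal{E}$: $\phi::=z\mid\nu z.\,\phi\mid L(\phi_1,\dots,\phi_n)$. Closed: every variable occurrence bound by a $\nu$. Guarded: every variable occurrence is separated from its binding $\nu$ by at least one modality. $\mathcal{E}_0$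 is the set of closed guarded expressions. Semantics in a coalgebra $C=(X,\xi)$ under valuation $\kappa:V\to\mathcal{P}X$: $[\![z]\!]^\kappa=\kappa(z)$; $[\![L(\phi_1,\dots,\phi_n)]\!]^\kappa=\xi^{-1}[[\![L]\!]_X([\![\phi_1]\!]^\kappa,\dots,[\![\phi_n]\!]^\kappa)]$; $[\![\nu z.\phi]\!]^\kappa=$ greatest fixed point of $Y\mapsto[\![\phi]\!]^{\kappa[z\mapsto Y]}$; for closed $\phi$ write $[\![\phi]\!]_C$. States of coalgebras are behaviourally equivalent if some coalgebra morphisms (maps $h$ with $Th\circ\xi=\zeta\circ h$) into a common coalgebra identify them. *)

From Stdlib Require Import List.
From Stdlib Require Fin.
Set Implicit Arguments.

Definition is_functor (T : Type -> Type)
  (fmap : forall X Y : Type, (X -> Y) -> T X -> T Y) : Prop :=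
  (forall (X : Type) (t : T X), fmap X X (fun x => x) t = t) /\
  (forall (X Y Z : Type) (f : X -> Y) (g : Y -> Z) (t : T X),
      fmap X Z (fun x => g (f x)) t = fmap Y Z g (fmap X Y f t)).

(** Subsets of X are predicates X -> Prop; an n-tuple of subsets is Fin.t n -> (X -> Prop). *)
Definition plifting (T : Type -> Type) (n : nat) : Type :=
  forall X : Type, (Fin.t n -> X -> Prop) -> T X -> Prop.

Definition is_natural (T : Type -> Type)
  (fmap : forall X Y : Type, (X -> Y) -> T X -> T Y) (n : nat) (lam : plifting T n) : Prop :=
  forall (X Y : Type) (f : X -> Y) (A : Fin.t n -> Y -> Prop) (t : T X),
    lam X (fun i x => A i (f x)) t <-> lam Y A (fmap X Y f t).

Definition is_monotone (T : Type -> Type) (n : nat) (lam : plifting T n) : Prop :=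
  forall (X : Type) (A B : Fin.t n -> X -> Prop),
    (forall i x, A i x -> B i x) -> forall t, lam X A t -> lam X B t.

Definition singletons (X : Type) (n : nat) (xs : Fin.t n -> X) : Fin.t n -> X -> Prop :=
  fun i y => y = xs i.

Definition is_singleton_preserving (T : Type -> Type) (n : nat) (lam : plifting T n) : Prop :=
  forall (X : Type) (xs : Fin.t n -> X),
    exists t : T X, forall t', lam X (singletons xs) t' <-> t' = t.

Definition strongly_expressive (T : Type -> Type) (Lab : Type) (ar : Lab -> nat)
  (lam : forall l : Lab, plifting T (ar l)) : Prop :=
  forall (X : Type) (t : T X), exists (l : Lab) (xs : Fin.t (ar l) -> X),
    forall t', lam l X (singletons xs) t' <-> t' = t.

Inductive Expr (V Lab : Type) (ar : Lab -> nat) : Type :=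
| EVar : V -> Expr V ar
| ENu : V -> Expr V ar -> Expr V ar
| EMod : forall l : Lab, (Fin.t (ar l) -> Expr V ar) -> Expr V ar.

Arguments EVar {V Lab ar} _.
Arguments ENu {V Lab ar} _ _.
Arguments EMod {V Lab ar} _ _.

Section Syntax.
Variables (V Lab : Type) (ar : Lab -> nat).

Fixpoint free (z : V) (phi : Expr V ar) : Prop :=
  match phi with
  | EVar y => y = z
  | ENu y p => y <> z /\ free z p
  | EMod l args => exists i, free z (args i)
  end.

Fixpoint unguarded_free (z : V) (phi : Expr V ar) : Prop :=
  match phi with
  | EVar y => y = z
  | ENu y p => y <> z /\ unguarded_free z p
  | EMod _ _ => False
  end.

Fixpoint guarded (phi : Expr V ar) : Prop :=
  match phi with
  | EVar _ => True
  | ENu z p => ~ unguarded_free z p /\ guarded p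
  | EMod l args => forall i, guarded (args i)
  end.

Definition closed (phi : Expr V ar) : Prop := forall z, ~ free z phi.

End Syntax.

Section Semantics.
Variables (T : Type -> Type) (Lab : Type) (ar : Lab -> nat)
  (lam : forall l : Lab, plifting T (ar l))
  (V : Type) (Veq : forall a b : V, {a = b} + {a <> b}).

Definition upd (X : Type) (kappa : V -> X -> Prop) (z : V) (S : X -> Prop) : V -> X -> Prop :=
  fun y => if Veq y z then S else kappa y.

Definition gfp (X : Type) (F : (X -> Prop) -> X -> Prop) : X -> Prop :=
  fun x => exists S : X -> Prop, (forall y, S y -> F S y) /\ S x.

Fixpoint sem (X : Type) (xi : X -> T X) (kappa : V -> X -> Prop) (phi : Expr V ar)
  : X -> Prop :=
  match phi with
  | EVar z => kappa z
  | ENu z p => gfp (fun S => sem xi (upd kappa z S) p)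
  | EMod l args => fun x => @lam l X (fun i => sem xi kappa (args i)) (xi x)
  end.

(** denotation of a closed expression (valuation irrelevant; we use the empty one) *)
Definition sem_closed (X : Type) (xi : X -> T X) (phi : Expr V ar) : X -> Prop :=
  sem xi (fun _ _ => False) phi.

End Semantics.

Definition is_coalg_morphism (T : Type -> Type)
  (fmap : forall X Y : Type, (X -> Y) -> T X -> T Y)
  (X : Type) (xi : X -> T X) (Y : Type) (zeta : Y -> T Y) (h : X -> Y) : Prop :=
  forall x, fmap X Y h (xi x) = zeta (h x).

Definition beh_equiv (T : Type -> Type)
  (fmap : forall X Y : Type, (X -> Y) -> T X -> T Y)
  (X : Type) (xi : X -> T X) (x : X) (Y : Type) (zeta : Y -> T Y) (y : Y) : Prop :=
  exists (Z : Type) (eta : Z -> T Z) (h1 : X -> Z) (h2 : Y -> Z),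
    @is_coalg_morphism T fmap X xi Z eta h1 /\ @is_coalg_morphism T fmap Y zeta Z eta h2 /\ h1 x = h2 y.

Definition finite_type (X : Type) : Prop := exists l : list X, forall x, In x l.

From Stdlib Require Import List Lia.
From Stdlib Require Fin.
From Stdlib Require Import ClassicalEpsilon FunctionalExtensionality PropExtensionality ProofIrrelevance.
From Stdlib Require Import Relations.Relation_Operators.

(* Call a relation P between the states of a coalgebra D and of a coalgebra C a
   simulation if every pair (s, x) in P satisfies x in [[L]](P[s_1], ..., P[s_n]),
   where {ξ_D(s)} = [[L]]({s_1}, ..., {s_n}).  By naturality, behavioural
   equivalence is a simulation; conversely, by singleton preservation, the
   quotient of D + C by the equivalence generated by a simulation is a coalgebra
   receiving morphisms from D and C, so simulated states are behaviourally
   equivalent.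
   A guarded expression is a finite system of modal equations (one node per
   modality, variables redirected to their binders by ν); its greatest solution
   is the largest simulation, which makes a closed guarded expression denote a
   class of the finite coalgebra carried by the system.  Conversely, unfolding
   the strongly expressive description of a finite coalgebra, ν-binding one
   variable per state and cutting each branch at a repeated state, gives a closed
   guarded expression whose denotation is again the largest simulation. *)

Lemma finite_Empty_set : finite_type Empty_set.
Proof. exists nil. intros []. Qed.

Lemma finite_Fin (n : nat) : finite_type (Fin.t n).
Proof.
  induction n as [|n [l Hl]].
  - exists nil. intros i. exact (Fin.case0 _ i).
  - exists (Fin.F1 :: map Fin.FS l). intros i. pattern i; apply Fin.caseS'.
    + now left.
    + intros p. right. now apply in_map.
Qed.

Lemma finite_option_sigT (n : nat) (F : Fin.t n -> Type) :
  (forall i, finite_type (F i)) -> finite_type (option {i : Fin.t n & F i}).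
Proof.
  intros HF. destruct (finite_Fin n) as [li Hli].
  set (list_of i := proj1_sig (constructive_indefinite_description _ (HF i))).
  exists (None :: map Some (flat_map (fun i => map (existT F i) (list_of i)) li)).
  intros [[i s]|]; [right|now left]. apply in_map, in_flat_map.
  exists i. split; [apply Hli|]. apply in_map.
  exact (proj2_sig (constructive_indefinite_description _ (HF i)) s).
Qed.

Lemma finite_type_inj_nat (D : Type) :
  finite_type D -> exists g : D -> nat, forall a b, g a = g b -> a = b.
Proof.
  intros [l Hl].
  exists (fun a => proj1_sig (constructive_indefinite_description _ (In_nth_error l a (Hl a)))).
  intros a b E.
  destruct (constructive_indefinite_description _ (In_nth_error l a (Hl a))) as [na Ha].
  destruct (constructive_indefinite_description _ (In_nth_error l b (Hl b))) as [nb Hb].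
  simpl in E. subst. congruence.
Qed.

Section CoalgebraicFixpointLogic.
Variables (T : Type -> Type) (fmap : forall X Y : Type, (X -> Y) -> T X -> T Y).
Hypothesis HT : is_functor T fmap.
Variables (Lab : Type) (ar : Lab -> nat) (lam : forall l : Lab, plifting T (ar l)).
Hypothesis Hnat : forall l, @is_natural T fmap (ar l) (lam l).
Hypothesis Hmon : forall l, @is_monotone T (ar l) (lam l).
Hypothesis Hsing : forall l, @is_singleton_preserving T (ar l) (lam l).

Lemma lam_mono (l : Lab) (X : Type) (A B : Fin.t (ar l) -> X -> Prop) (t : T X) :
  (forall i x, A i x -> B i x) -> lam l X A t -> lam l X B t.
Proof. exact (fun H => Hmon l X A B H t). Qed.

Lemma fmap_comp (A B C : Type) (f : A -> B) (g : B -> C) (t : T A) :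
  fmap A C (fun x => g (f x)) t = fmap B C g (fmap A B f t).
Proof. apply (proj2 HT). Qed.

Section Simulation.
Variables (D X : Type) (d : D -> T D) (xi : X -> T X).
Variables (lab : D -> Lab) (next : forall s, Fin.t (ar (lab s)) -> D).
Hypothesis d_described : forall s, lam (lab s) D (singletons (next s)) (d s).

Notation beh s x := (@beh_equiv T fmap D d s X xi x).

Definition simulation (P : D -> X -> Prop) : Prop :=
  forall s x, P s x -> lam (lab s) X (fun i => P (next s i)) (xi x).

Lemma beh_equiv_simulation : simulation (fun s x => beh s x).
Proof.
  intros s x [Z [eta [h1 [h2 [m1 [m2 e]]]]]].
  assert (Himg : lam (lab s) Z (fun i w => w = h1 (next s i)) (fmap X Z h2 (xi x))).
  { rewrite m2, <- e, <- m1. apply (Hnat (lab s) D Z h1).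
    apply (lam_mono _ _ (singletons (next s))); [|apply d_described].
    intros i y ->. reflexivity. }
  apply (Hnat (lab s) X Z h2) in Himg.
  eapply lam_mono; [|exact Himg]. intros i y E. now exists Z, eta, h1, h2.
Qed.

Section Quotient.
Variable P : D -> X -> Prop.
Hypothesis P_sim : simulation P.

Definition link (a b : D + X) : Prop :=
  match a, b with inl s, inr x => P s x | _, _ => False end.
Definition linked : D + X -> D + X -> Prop := clos_refl_sym_trans _ link.
Definition quot : Type := {C : D + X -> Prop | exists w, C = linked w}.
Definition cls (w : D + X) : quot := exist _ (linked w) (ex_intro _ w eq_refl).

Lemma cls_eq (a b : D + X) : linked a b -> cls a = cls b.
Proof.
  intros Hab. apply subset_eq_compat. extensionality c.
  apply propositional_extensionality. split; intros H.
  - exact (rst_trans _ _ _ _ _ (rst_sym _ _ _ _ Hab) H).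
  - exact (rst_trans _ _ _ _ _ Hab H).
Qed.

Lemma linked_of_cls_eq (a b : D + X) : cls a = cls b -> linked a b.
Proof.
  intros E. apply (f_equal (@proj1_sig _ _)) in E. simpl in E.
  rewrite E. apply rst_refl.
Qed.

Definition repr (q : quot) : D + X :=
  proj1_sig (constructive_indefinite_description _ (proj2_sig q)).

Lemma cls_repr (q : quot) : cls (repr q) = q.
Proof.
  destruct q as [C HC]. unfold repr, cls; simpl.
  destruct (constructive_indefinite_description _ HC) as [w Hw]; simpl.
  apply subset_eq_compat. now symmetry.
Qed.

Definition sum_str (w : D + X) : T (D + X) :=
  match w with
  | inl s => fmap D (D + X) inl (d s)
  | inr x => fmap X (D + X) inr (xi x)
  end.

Definition quot_str (q : quot) : T quot := fmap _ _ cls (sum_str (repr q)).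

(* Both sides lie in [[lab s]]({cls (inl (next s 1))}, ...), a singleton. *)
Lemma link_str (s : D) (x : X) :
  P s x -> fmap _ _ cls (sum_str (inl s)) = fmap _ _ cls (sum_str (inr x)).
Proof.
  intros Psx. simpl. rewrite <- !fmap_comp.
  destruct (Hsing (lab s) quot (fun i => cls (inl (next s i)))) as [t0 Ht0].
  transitivity t0; [|symmetry]; apply Ht0.
  - apply (Hnat (lab s) D quot (fun y => cls (inl y))).
    eapply lam_mono; [|apply d_described]. intros i y ->. reflexivity.
  - apply (Hnat (lab s) X quot (fun y => cls (inr y))).
    eapply lam_mono; [|exact (P_sim _ _ Psx)]. intros i y Hy.
    apply cls_eq, rst_sym, rst_step. exact Hy.
Qed.

Lemma linked_str (a b : D + X) :
  linked a b -> fmap _ _ cls (sum_str a) = fmap _ _ cls (sum_str b).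
Proof.
  induction 1 as [[s|x1] [s'|x2] H| | |]; try contradiction; try congruence.
  apply link_str; exact H.
Qed.

Lemma cls_morphism (w : D + X) : fmap _ _ cls (sum_str w) = quot_str (cls w).
Proof. apply linked_str, linked_of_cls_eq. symmetry. apply cls_repr. Qed.

Lemma simulation_beh_equiv (s : D) (x : X) : P s x -> beh s x.
Proof.
  intros Psx. exists quot, quot_str, (fun s0 => cls (inl s0)), (fun x0 => cls (inr x0)).
  split; [|split].
  - intros s0. rewrite fmap_comp. apply (cls_morphism (inl s0)).
  - intros x0. rewrite fmap_comp. apply (cls_morphism (inr x0)).
  - apply cls_eq, rst_step. exact Psx.
Qed.
End Quotient.
End Simulation.

Variables (V : Type) (Veq : forall a b : V, {a = b} + {a <> b}).
Notation semV X xi k phi := (@sem T Lab ar lam V Veq X xi k phi).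

(* Node s stands for the equation s = label s (edge s 1, ..., edge s n); an edge
   leads to a node or to a free variable, and so may the root. *)
Record eqsys : Type := EqSys {
  node : Type;
  node_finite : finite_type node;
  label : node -> Lab;
  edge : forall s, Fin.t (ar (label s)) -> node + V;
  root : node + V }.

Definition interp (R : eqsys) (X : Type) (P : node R -> X -> Prop) (k : V -> X -> Prop)
  (c : node R + V) : X -> Prop :=
  match c with inl s => P s | inr w => k w end.

Definition postfixed (R : eqsys) (X : Type) (xi : X -> T X) (k : V -> X -> Prop)
  (P : node R -> X -> Prop) : Prop :=
  forall s x, P s x -> lam (label R s) X (fun j => interp R X P k (edge R s j)) (xi x).

Definition gsol (R : eqsys) (X : Type) (xi : X -> T X) (k : V -> X -> Prop)
  (s : node R) (x : X) : Prop :=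
  exists P, postfixed R X xi k P /\ P s x.

Definition occurs (R : eqsys) (w : V) : Prop :=
  root R = inr w \/ exists s j, edge R s j = inr w.

Lemma interp_mono (R : eqsys) X (P P' : node R -> X -> Prop) k c x :
  (forall s y, P s y -> P' s y) -> interp R X P k c x -> interp R X P' k c x.
Proof. destruct c; simpl; auto. Qed.

Lemma gsol_postfixed (R : eqsys) X xi k : postfixed R X xi k (gsol R X xi k).
Proof.
  intros s x [P [HP Px]]. eapply lam_mono; [|exact (HP _ _ Px)].
  intros j y. apply interp_mono. intros s' y' H'. now exists P.
Qed.

Lemma gsol_unfold (R : eqsys) X xi k s x :
  lam (label R s) X (fun j => interp R X (gsol R X xi k) k (edge R s j)) (xi x) ->
  gsol R X xi k s x.
Proof.
  intros H. exists (fun s' y => gsol R X xi k s' y \/ (s' = s /\ y = x)).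
  split; [|now right]. intros s' y [Hg|[-> ->]].
  - eapply lam_mono; [|exact (gsol_postfixed _ _ _ _ _ _ Hg)].
    intros j y'. apply interp_mono. auto.
  - eapply lam_mono; [|exact H]. intros j y'. apply interp_mono. auto.
Qed.

(* The first clause is what lets guardedness of [ν z. p] rule out [root R = inr z]. *)
Definition represents (phi : Expr V ar) (R : eqsys) : Prop :=
  (forall w, root R = inr w -> unguarded_free w phi) /\
  (forall w, occurs R w -> free w phi) /\
  (forall X xi k x, semV X xi k phi x <-> interp R X (gsol R X xi k) k (root R) x).

Definition varsys (w : V) : eqsys :=
  EqSys Empty_set finite_Empty_set (fun e => match e with end) (fun e => match e with end) (inr w).

Lemma varsys_represents (w : V) : represents (EVar w) (varsys w).
Proof.
  split; [|split].
  - simpl. congruence.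
  - intros w' [E|[[] _]]. simpl in E. congruence.
  - reflexivity.
Qed.

Section ModalitySystem.
Variables (l : Lab) (Rs : Fin.t (ar l) -> eqsys).

(* [None] is the new root node; [Some (i; s)] is node [s] of the [i]-th system. *)
Definition mod_node : Type := option {i : Fin.t (ar l) & node (Rs i)}.

Definition mod_embed (i : Fin.t (ar l)) (c : node (Rs i) + V) : mod_node + V :=
  match c with inl s => inl (Some (existT _ i s)) | inr w => inr w end.

Definition mod_label (c : mod_node) : Lab :=
  match c with None => l | Some (existT _ i s) => label (Rs i) s end.

Definition mod_edge (c : mod_node) : Fin.t (ar (mod_label c)) -> mod_node + V :=
  match c as c0 return Fin.t (ar (mod_label c0)) -> mod_node + V with
  | None => fun i => mod_embed i (root (Rs i))
  | Some (existT _ i s) => fun j => mod_embed i (edge (Rs i) s j)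
  end.

Definition modsys : eqsys :=
  EqSys mod_node (finite_option_sigT _ _ (fun i => node_finite (Rs i))) mod_label mod_edge (inl None).

Lemma modsys_gsol X xi k i s x :
  gsol modsys X xi k (Some (existT _ i s)) x <-> gsol (Rs i) X xi k s x.
Proof.
  split.
  - intros [P [HP Px]]. exists (fun s' y => P (Some (existT _ i s')) y). split; [|exact Px].
    intros s' y Hy. eapply lam_mono; [|exact (HP _ _ Hy)].
    intros j x'. simpl. destruct (edge (Rs i) s' j); simpl; auto.
  - intros H. exists (fun c y => match c with
                                 | None => False
                                 | Some (existT _ j s') => gsol (Rs j) X xi k s' y end).
    split; [|exact H]. intros [[j s']|] y Hy; [|contradiction].
    eapply lam_mono; [|exact (gsol_postfixed _ _ _ _ _ _ Hy)].
    intros j' x'. simpl. destruct (edge (Rs j) s' j'); simpl; auto.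
Qed.

Lemma modsys_interp X xi k i c x :
  interp modsys X (gsol modsys X xi k) k (mod_embed i c) x <->
  interp (Rs i) X (gsol (Rs i) X xi k) k c x.
Proof. destruct c; simpl; [apply modsys_gsol|tauto]. Qed.

Lemma modsys_root X xi k x :
  gsol modsys X xi k None x <->
  lam l X (fun i => interp (Rs i) X (gsol (Rs i) X xi k) k (root (Rs i))) (xi x).
Proof.
  split; intros H.
  - apply gsol_postfixed in H. eapply lam_mono; [|exact H]. intros i y. apply modsys_interp.
  - apply gsol_unfold. eapply lam_mono; [|exact H]. intros i y. apply modsys_interp.
Qed.

Lemma modsys_represents (args : Fin.t (ar l) -> Expr V ar) :
  (forall i, represents (args i) (Rs i)) -> represents (EMod l args) modsys.
Proof.
  intros HR. split; [|split].
  - discriminate.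
  - intros w [E|[[[i s]|] [j E]]]; [discriminate| |].
    + exists i. apply (HR i). right. exists s, j. simpl in E.
      destruct (edge (Rs i) s j); simpl in E; congruence.
    + exists j. apply (HR j). left. simpl in E.
      destruct (root (Rs j)); simpl in E; congruence.
  - intros X xi k x. simpl. rewrite modsys_root.
    split; apply lam_mono; intros i y; apply (HR i).
Qed.
End ModalitySystem.

Section NuSystem.
Variables (z : V) (R : eqsys).

Definition nu_redirect (c : node R + V) : node R + V :=
  match c with inl s => inl s | inr w => if Veq w z then root R else inr w end.

Definition nusys : eqsys :=
  EqSys (node R) (node_finite R) (label R) (fun s j => nu_redirect (edge R s j)) (root R).

Variable p : Expr V ar.
Hypothesis Rp : forall X xi k x, semV X xi k p x <-> interp R X (gsol R X xi k) k (root R) x.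

Lemma nusys_gsol X xi k x (r : node R) :
  root R = inl r -> semV X xi k (ENu z p) x <-> gsol nusys X xi k r x.
Proof.
  intros Er. simpl. split.
  - intros [S [HS Sx]]. exists (gsol R X xi (upd Veq k z S)). split.
    + intros s y Hy. apply gsol_postfixed in Hy. eapply lam_mono; [|exact Hy].
      intros j y'. simpl. destruct (edge R s j) as [c|w]; simpl; [auto|].
      unfold upd. destruct (Veq w z) as [->|]; [|auto].
      intros Sy'. apply HS, Rp in Sy'. now rewrite Er in *.
    + apply HS, Rp in Sx. now rewrite Er in Sx.
  - intros Hg. exists (gsol nusys X xi k r). split; [|exact Hg].
    intros y Hy. apply Rp. rewrite Er. exists (gsol nusys X xi k). split; [|exact Hy].
    intros s y' H'. apply gsol_postfixed in H'. eapply lam_mono; [|exact H'].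
    intros j y0. simpl. destruct (edge R s j) as [c|w]; simpl; [auto|].
    unfold upd. destruct (Veq w z) as [->|]; [|auto]. now rewrite Er.
Qed.

Lemma nusys_var X xi k x (w : V) :
  root R = inr w -> w <> z -> semV X xi k (ENu z p) x <-> k w x.
Proof.
  intros Er ne. simpl. unfold gfp. split.
  - intros [S [HS Sx]]. apply HS, Rp in Sx. rewrite Er in Sx. simpl in Sx.
    unfold upd in Sx. destruct (Veq w z); [contradiction|exact Sx].
  - intros Hw. exists (k w). split; [|exact Hw]. intros y Hy. apply Rp. rewrite Er. simpl.
    unfold upd. destruct (Veq w z); [contradiction|exact Hy].
Qed.
End NuSystem.

Lemma nusys_represents (z : V) (R : eqsys) (p : Expr V ar) :
  ~ unguarded_free z p -> represents p R -> represents (ENu z p) (nusys z R).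
Proof.
  intros Hug [Hroot [Hocc Hsem]].
  assert (Hrz : root R <> inr z) by (intros E; apply Hug, Hroot, E).
  split; [|split].
  - intros w E. split; [|apply Hroot, E]. intros <-. apply Hrz, E.
  - intros w [E|[s [j E]]]; simpl in E.
    + split; [|apply Hocc; now left]. intros <-. apply Hrz, E.
    + unfold nu_redirect in E. destruct (edge R s j) as [c|w'] eqn:Ej; [discriminate|].
      destruct (Veq w' z) as [->|ne].
      * split; [|apply Hocc; now left]. intros <-. apply Hrz, E.
      * injection E as <-. split; [congruence|]. apply Hocc. right. now exists s, j.
  - intros X xi k x. simpl.
    destruct (root R) as [r|w] eqn:Er in |- *; simpl.
    + now apply nusys_gsol.
    + apply (nusys_var z R p Hsem); [exact Er|]. intros <-. now apply Hrz.
Qed.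

Lemma guarded_represented (phi : Expr V ar) : guarded phi -> exists R, represents phi R.
Proof.
  induction phi as [w | z p IH | l args IH]; simpl; intros Hg.
  - exists (varsys w). apply varsys_represents.
  - destruct Hg as [Hug Hg]. destruct (IH Hg) as [R HR].
    exists (nusys z R). now apply nusys_represents.
  - assert (HRs : forall i, {R : eqsys | represents (args i) R})
      by (intros i; apply constructive_indefinite_description, IH, Hg).
    exists (modsys l (fun i => proj1_sig (HRs i))).
    apply modsys_represents. intros i. exact (proj2_sig (HRs i)).
Qed.

Section ClosedSystem.
Variables (R : eqsys) (R_closed : forall w, ~ occurs R w).

(* The [inr] branch is never taken since [R] has no free variables. *)
Definition edge_node (s : node R) (j : Fin.t (ar (label R s))) : node R :=
  match edge R s j with inl t => t | inr _ => s end.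

Definition sys_str (s : node R) : T (node R) :=
  proj1_sig (constructive_indefinite_description _ (Hsing (label R s) _ (edge_node s))).

Lemma sys_str_described (s : node R) :
  lam (label R s) (node R) (singletons (edge_node s)) (sys_str s).
Proof.
  apply (proj2_sig (constructive_indefinite_description _ (Hsing (label R s) _ (edge_node s)))).
  reflexivity.
Qed.

Lemma interp_closed_edge X (P : node R -> X -> Prop) k s j x :
  interp R X P k (edge R s j) x <-> P (edge_node s j) x.
Proof.
  unfold edge_node. destruct (edge R s j) as [t|w] eqn:E; [reflexivity|].
  exfalso. apply (R_closed w). right. now exists s, j.
Qed.

Lemma gsol_closed_beh_equiv X xi k s x :
  gsol R X xi k s x <-> @beh_equiv T fmap _ sys_str s X xi x.
Proof.
  split.
  - apply (simulation_beh_equiv _ _ _ _ _ _ sys_str_described).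
    intros s' y Hy. apply gsol_postfixed in Hy.
    eapply lam_mono; [|exact Hy]. intros j y'. apply interp_closed_edge.
  - intros Hb. exists (fun s' y => @beh_equiv T fmap _ sys_str s' X xi y). split; [|exact Hb].
    intros s' y Hy. apply (beh_equiv_simulation _ _ _ _ _ _ sys_str_described) in Hy.
    eapply lam_mono; [|exact Hy]. intros j y' H. now apply interp_closed_edge.
Qed.
End ClosedSystem.

Lemma closed_guarded_denotes_class (phi : Expr V ar) :
  closed phi -> guarded phi ->
  exists (D : Type) (d : D -> T D) (z : D), finite_type D /\
    forall (X : Type) (xi : X -> T X) (x : X),
      @sem_closed T Lab ar lam V Veq X xi phi x <-> @beh_equiv T fmap D d z X xi x.
Proof.
  intros Hc Hg. destruct (guarded_represented phi Hg) as [R [_ [Hocc Hsem]]].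
  assert (R_closed : forall w, ~ occurs R w) by (intros w Hw; exact (Hc w (Hocc w Hw))).
  destruct (root R) as [r|w] eqn:Er.
  2:{ exfalso. apply (R_closed w). now left. }
  exists (node R), (sys_str R), r. split; [apply node_finite|].
  intros X xi x. unfold sem_closed. rewrite Hsem. apply gsol_closed_beh_equiv, R_closed.
Qed.

Section Unfolding.
Variables (D : Type) (lab : D -> Lab) (next : forall s, Fin.t (ar (lab s)) -> D).
Variable v : D -> V.

(* [vis] lists the states on the current branch; revisiting one of them yields
   the variable bound at its first visit.  The fuel [n] only serves termination. *)
Fixpoint unfold_expr (n : nat) (s : D) (vis : list D) : Expr V ar :=
  match n with
  | 0 => EVar (v s)
  | S n' =>
      if excluded_middle_informative (In s vis) then EVar (v s)
      else ENu (v s) (EMod (lab s) (fun i => unfold_expr n' (next s i) (s :: vis)))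
  end.

Lemma unfold_guarded (n : nat) : forall s vis, guarded (unfold_expr n s vis).
Proof.
  induction n as [|n IH]; intros s vis; simpl; [exact I|].
  destruct (excluded_middle_informative (In s vis)); simpl; auto.
Qed.

Variables (ld : list D) (ld_full : forall s, In s ld).

Lemma fuel_exhausted (s : D) (vis : list D) :
  NoDup vis -> length ld <= length vis -> In s vis.
Proof.
  intros Hnd Hlen. apply NNPP. intros Hs.
  assert (Hincl : length (s :: vis) <= length ld).
  { apply NoDup_incl_length; [now constructor|]. intros y _. apply ld_full. }
  simpl in Hincl. lia.
Qed.

Lemma unfold_free (n : nat) : forall s vis w,
  NoDup vis -> length ld <= n + length vis -> free w (unfold_expr n s vis) ->
  exists s', In s' vis /\ w = v s'.
Proof.
  induction n as [|n IH]; intros s vis w Hnd Hlen Hf; simpl in Hf.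
  - exists s. split; [apply fuel_exhausted|]; auto.
  - destruct (excluded_middle_informative (In s vis)) as [Hs|Hs]; simpl in Hf.
    + now exists s.
    + destruct Hf as [ne [i Hf]].
      destruct (IH (next s i) (s :: vis) w) as [s' [[<-|Hs'] E]];
        [now constructor|simpl; lia|exact Hf|congruence|].
      now exists s'.
Qed.

Hypothesis v_inj : forall a b, v a = v b -> a = b.

Lemma upd_v_same X (k : V -> X -> Prop) (s : D) (S : X -> Prop) :
  upd Veq k (v s) S (v s) = S.
Proof. unfold upd. destruct (Veq (v s) (v s)); congruence. Qed.

Lemma upd_v_other X (k : V -> X -> Prop) (s s' : D) (S : X -> Prop) :
  s' <> s -> upd Veq k (v s) S (v s') = k (v s').
Proof.
  intros ne. unfold upd. destruct (Veq (v s') (v s)) as [E|]; [|reflexivity].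
  exfalso. exact (ne (v_inj _ _ E)).
Qed.

Variables (X : Type) (xi : X -> T X).

Definition simulation_upto (vis : list D) (K : D -> X -> Prop) (P : D -> X -> Prop) : Prop :=
  forall s x, P s x ->
    (In s vis -> K s x) /\ (~ In s vis -> lam (lab s) X (fun i => P (next s i)) (xi x)).

Definition greatest_simulation_upto (vis : list D) (K : D -> X -> Prop) (s : D) (x : X) : Prop :=
  exists P, simulation_upto vis K P /\ P s x.

Lemma greatest_simulation_upto_spec (vis : list D) (K : D -> X -> Prop) :
  simulation_upto vis K (greatest_simulation_upto vis K).
Proof.
  intros s x [P [HP Px]]. destruct (HP _ _ Px) as [Hin Hout]. split; [exact Hin|].
  intros Hs. eapply lam_mono; [|exact (Hout Hs)]. intros i y Py. now exists P.
Qed.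

Lemma simulation_upto_bind (vis : list D) (s : D) (K K' Q : D -> X -> Prop) (S : X -> Prop) :
  ~ In s vis ->
  (forall y, K' s y -> S y) ->
  (forall s', s' <> s -> forall y, K' s' y -> K s' y) ->
  simulation_upto (s :: vis) K' Q ->
  (forall y, S y -> lam (lab s) X (fun i => Q (next s i)) (xi y)) ->
  simulation_upto vis K (fun s' y => Q s' y \/ (s' = s /\ S y)).
Proof.
  intros Hs HK's HK' HQ Hstep.
  assert (Hstep' : forall y, S y ->
            lam (lab s) X (fun i y' => Q (next s i) y' \/ (next s i = s /\ S y')) (xi y)).
  { intros y Sy. eapply lam_mono; [|exact (Hstep y Sy)]. intros i y' H'. now left. }
  intros s' y [Qy|[-> Sy]].
  - destruct (HQ _ _ Qy) as [Hin Hout]. destruct (classic (s' = s)) as [->|ne].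
    + split; [contradiction|]. intros _. apply Hstep', HK's, Hin. now left.
    + split.
      * intros Hs'. apply HK'; [exact ne|]. apply Hin. now right.
      * intros Hs'. eapply lam_mono; [|apply Hout; intros [E|E]; auto].
        intros i y' H'. now left.
  - split; [contradiction|]. intros _. exact (Hstep' y Sy).
Qed.

Lemma sem_unfold_simulation (n : nat) : forall vis s k x,
  NoDup vis -> length ld <= n + length vis ->
  semV X xi k (unfold_expr n s vis) x ->
  greatest_simulation_upto vis (fun s' => k (v s')) s x.
Proof.
  assert (cut : forall vis s k x, In s vis -> k (v s) x ->
            greatest_simulation_upto vis (fun s' => k (v s')) s x).
  { intros vis s k x Hs Hk. exists (fun s' y => s' = s /\ k (v s) y). split; [|auto].
    intros s' y [-> Hy]. split; [auto|contradiction]. }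
  induction n as [|n IH]; intros vis s k x Hnd Hlen Hsem; simpl in Hsem.
  - apply cut; [apply fuel_exhausted|]; auto.
  - destruct (excluded_middle_informative (In s vis)) as [Hs|Hs]; [now apply cut|].
    destruct Hsem as [S [HS Sx]].
    set (K' := fun s0 => upd Veq k (v s) S (v s0)).
    exists (fun s' y => greatest_simulation_upto (s :: vis) K' s' y \/ (s' = s /\ S y)).
    split; [|now right].
    apply (simulation_upto_bind _ _ _ K'); [exact Hs| | |apply greatest_simulation_upto_spec|].
    + intros y. unfold K'. now rewrite upd_v_same.
    + intros s' ne y. unfold K'. now rewrite upd_v_other.
    + intros y Sy.
      eapply lam_mono; [|exact (HS y Sy)]. intros i y' H'.
      apply IH; [now constructor|simpl; lia|exact H'].
Qed.

Variables (d : D -> T D) (d_described : forall s, lam (lab s) D (singletons (next s)) (d s)).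

Lemma beh_equiv_sem_unfold (n : nat) : forall vis s k,
  NoDup vis -> length ld <= n + length vis ->
  (forall s', In s' vis -> forall y, @beh_equiv T fmap D d s' X xi y -> k (v s') y) ->
  forall x, @beh_equiv T fmap D d s X xi x -> semV X xi k (unfold_expr n s vis) x.
Proof.
  induction n as [|n IH]; intros vis s k Hnd Hlen Hk x Hx; simpl.
  - apply Hk; [apply fuel_exhausted|]; auto.
  - destruct (excluded_middle_informative (In s vis)) as [Hs|Hs]; [now apply Hk|].
    exists (fun y => @beh_equiv T fmap D d s X xi y). split; [|exact Hx].
    intros y Hy. apply (beh_equiv_simulation _ _ _ _ _ _ d_described) in Hy.
    eapply lam_mono; [|exact Hy]. intros i y' Hb.
    apply IH; [now constructor|simpl; lia| |exact Hb].
    intros s' [<-|Hs'] y0 Hb0.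
    + now rewrite upd_v_same.
    + rewrite upd_v_other; [now apply Hk|]. intros ->. contradiction.
Qed.
End Unfolding.

Lemma finite_class_denoted
  (Hexpr : @strongly_expressive T Lab ar lam)
  (Vinf : exists f : nat -> V, forall m n, f m = f n -> m = n)
  (D : Type) (d : D -> T D) (z : D) :
  finite_type D ->
  exists phi : Expr V ar, closed phi /\ guarded phi /\
    forall (X : Type) (xi : X -> T X) (x : X),
      @sem_closed T Lab ar lam V Veq X xi phi x <-> @beh_equiv T fmap D d z X xi x.
Proof.
  intros Dfin. pose proof Dfin as [ld ld_full].
  destruct Vinf as [f f_inj]. destruct (finite_type_inj_nat D Dfin) as [g g_inj].
  assert (Hdesc : forall s, {l : Lab & {xs : Fin.t (ar l) -> D | lam l D (singletons xs) (d s)}}).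
  { intros s. destruct (constructive_indefinite_description _ (Hexpr D (d s))) as [l Hl].
    exists l. destruct (constructive_indefinite_description _ Hl) as [xs Hxs].
    exists xs. now apply Hxs. }
  set (lab s := projT1 (Hdesc s)).
  set (next s := proj1_sig (projT2 (Hdesc s)) : Fin.t (ar (lab s)) -> D).
  assert (d_described : forall s, lam (lab s) D (singletons (next s)) (d s))
    by (intros s; exact (proj2_sig (projT2 (Hdesc s)))).
  set (v s := f (g s)).
  assert (v_inj : forall a b, v a = v b -> a = b) by (intros a b H; now apply g_inj, f_inj).
  exists (unfold_expr D lab next v (length ld) z nil). split; [|split].
  - intros w Hw. eapply unfold_free in Hw; [|exact ld_full|constructor|lia].
    now destruct Hw as [s [[] _]].
  - apply unfold_guarded.
  - intros X xi x. unfold sem_closed. split.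
    + intros Hsem. eapply sem_unfold_simulation in Hsem; [|exact ld_full|exact v_inj|constructor|lia].
      destruct Hsem as [P [HP Px]].
      apply (simulation_beh_equiv _ _ d xi lab next d_described P); [|exact Px].
      intros s y Py. apply (HP _ _ Py). intros [].
    + apply (beh_equiv_sem_unfold _ _ _ _ ld); [exact ld_full|exact v_inj|exact d_described|constructor|lia|].
      intros s [].
Qed.
End CoalgebraicFixpointLogic.

Theorem mainTheorem13
  (T : Type -> Type) (fmap : forall X Y : Type, (X -> Y) -> T X -> T Y)
  (HT : is_functor T fmap)
  (Lab : Type) (ar : Lab -> nat) (lam : forall l : Lab, plifting T (ar l))
  (Hnat : forall l, @is_natural T fmap (ar l) (lam l))
  (Hmon : forall l, @is_monotone T (ar l) (lam l))
  (Hsing : forall l, @is_singleton_preserving T (ar l) (lam l))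
  (Hexpr : @strongly_expressive T Lab ar lam)
  (V : Type) (Veq : forall a b : V, {a = b} + {a <> b})
  (Vinf : exists f : nat -> V, forall m n, f m = f n -> m = n) :
  (forall phi : Expr V ar, @closed V Lab ar phi -> @guarded V Lab ar phi ->
     exists (D : Type) (d : D -> T D) (z : D), finite_type D /\
       forall (X : Type) (xi : X -> T X) (x : X),
         @sem_closed T Lab ar lam V Veq X xi phi x <-> @beh_equiv T fmap D d z X xi x)
  /\
  (forall (D : Type) (d : D -> T D) (z : D), finite_type D ->
     exists phi : Expr V ar, @closed V Lab ar phi /\ @guarded V Lab ar phi /\
       forall (X : Type) (xi : X -> T X) (x : X),
         @sem_closed T Lab ar lam V Veq X xi phi x <-> @beh_equiv T fmap D d z X xi x).
Proof.
  split.
  - exact (closed_guarded_denotes_class T fmap HT Lab ar lam Hnat Hmon Hsing V Veq).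
  - exact (finite_class_denoted T fmap HT Lab ar lam Hnat Hmon Hsing V Veq Hexpr Vinf).
Qed.
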